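(* Let $G\in\mathbb{R}^{z_1\times\cdots\times z_n}$ and, for $k=1,\dots,n$, let $H_k\in\mathbb{R}^{m_{k,1}\times\cdots\times m_{k,d_k}}$ with $d_k\ge1$. Let $T=G\circledast[H_1,\dots,H_n]$, a tensor with dimensions indexed by pairs $(k,i)$, $1\le k\le n$, $1\le i\le d_k$, of sizes $s_{k,i}=z_k+m_{k,i}-1$. Then for every $k$ and $i$, $$\operatorname{rank}([k,i],T)\le\begin{cases}\min\big(s_{k,1},\operatorname{rank}(k,G)\big), & \text{if } H_k \text{ is one-dimensional } (d_k=1),\\ \min\big(s_{k,i},\,z_k\operatorname{rank}(i,H_k)\big), & \text{otherwise.}\end{cases}$$
   Context: Tensors are indexed from $0$ and regarded as functions on $\mathbb{Z}^d$ vanishing outside their index ranges. The outer convolution $T=G\circledast[H_1,\dots,H_n]$ is the tensor of order $\sum_k d_k$ with entries $T(t_{1,1},\dots,t_{1,d_1};\dots;t_{n,1},\dots,t_{n,d_n})=\sum_{\tau_1,\dots,\tau_n}G(\tau_1,\dots,\tau_n)\prod_{k=1}^n H_k(t_{k,1}-\tau_k,\,t_{k,2}-\tau_k,\dots,t_{k,d_k}-\tau_k)$, for $t_{k,i}\in\{0,\dots,z_k+m_{k,i}-2\}$. For a tensor $A$, $\operatorname{rank}(j,A)$ is the $j$-th Tucker rank, i.e. the rank of the mode-$j$ matricization of $A$ (for a matrix, its rank; a one-dimensional vector has rank $1$); $\operatorname{rank}([k,i],T)$ is the Tucker rank of $T$ along the dimension indexed by $(k,i)$. *)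

From HB Require Import structures.
From mathcomp Require Import all_boot all_order all_algebra.
From mathcomp Require Import reals.
Set Implicit Arguments. Unset Strict Implicit. Unset Printing Implicit Defensive.
Import Order.TTheory GRing.Theory Num.Theory.
Local Open Scope ring_scope.

(* A tensor whose modes are indexed by a finite type I, with size m j along
   mode j, is a function on the index set idx m = prod_j {0,..,m j - 1}. *)
Definition idx (I : finType) (m : I -> nat) := {dffun forall j : I, 'I_(m j)}.

Definition oidx (I : finType) (m : I -> nat) (j : I) :=
  {dffun forall p : {i : I | i != j}, 'I_(m (sval p))}.

Definition join (I : finType) (m : I -> nat) (j : I) (a : 'I_(m j))
    (c : oidx m j) : idx m :=
  [ffun i => match i =P j with
             | ReflectT e => cast_ord (f_equal m (esym e)) a
             | ReflectF ne => c (exist (fun i => i != j) i (introN eqP ne))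
             end].

Definition matricize (R : fieldType) (I : finType) (m : I -> nat) (j : I)
    (A : idx m -> R) : 'M[R]_(m j, #|{: oidx m j}|) :=
  \matrix_(a < m j, c < #|{: oidx m j}|) A (join a (enum_val c)).

Definition tucker_rank (R : fieldType) (I : finType) (m : I -> nat) (j : I)
    (A : idx m -> R) : nat := \rank (matricize j A).

(* Zero extension of a tensor to integer index vectors. *)
Definition ext (R : fieldType) (I : finType) (m : I -> nat) (A : idx m -> R)
    (x : I -> int) : R :=
  \sum_(u : idx m) (if [forall i, (u i : nat)%:Z == x i] then A u else 0).

Definition pmode (n : nat) (d : 'I_n -> nat) := {k : 'I_n & 'I_(d k)}.

Definition conv_size (n : nat) (z d : 'I_n -> nat)
    (m : forall k : 'I_n, 'I_(d k) -> nat) (p : pmode d) : nat :=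
  (z (projT1 p) + m (projT1 p) (projT2 p)).-1.

Definition outer_conv (R : fieldType) (n : nat) (z d : 'I_n -> nat)
    (m : forall k : 'I_n, 'I_(d k) -> nat)
    (G : idx z -> R) (H : forall k : 'I_n, idx (m k) -> R)
    (t : idx (conv_size z m)) : R :=
  \sum_(tau : idx z) G tau *
    \prod_(k : 'I_n)
      ext (H k) (fun i : 'I_(d k) =>
                   (t (existT _ k i) : nat)%:Z - (tau k : nat)%:Z).

From HB Require Import structures.
From mathcomp Require Import all_boot all_order all_algebra.
From mathcomp Require Import reals.
Set Implicit Arguments. Unset Strict Implicit. Unset Printing Implicit Defensive.
Import Order.TTheory GRing.Theory Num.Theory.
Local Open Scope ring_scope.

(* Fix a mode (k,i) of T and write a for the mode-(k,i) coordinate. Expanding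
   the convolution, T(a, c) = sum_tau G(tau) H_k(t_k - tau_k)
   prod_{k' <> k} H_k'(t_k' - tau_k'), and only the factor H_k depends on a.
   Splitting the index of H_k into its mode-i coordinate and the others, every
   mode-(k,i) fibre of T is a combination of columns of S_b H_k^(i), where S_b
   is the shift by b < z_k and H_k^(i) the mode-i matricization: these span a
   space of dimension at most z_k rank(i, H_k). When d_k = 1, H_k is a vector h
   and the fibres are combinations of columns of C G^(k), with C the Toeplitz
   matrix C(a, b) = h(a - b), so their span has dimension at most rank(k, G).
   The bound s_{k,i} is the number of rows of the matricization. *)

Local Notation coord t q := ((t q : nat)%:Z).

Lemma mxrank_le_outer_sum (R : fieldType) (X : finType) (p q r : nat)
    (M : 'M[R]_(p, q)) (u : X -> 'rV[R]_p) (w : X -> 'I_q -> R)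
    (B : 'M[R]_(r, p)) :
  (forall a c, M a c = \sum_x u x 0 a * w x c) -> (forall x, (u x <= B)%MS) ->
  (\rank M <= \rank B)%N.
Proof.
move=> defM uB; rewrite -mxrank_tr; apply: mxrankS.
have -> : M^T = \sum_x (\col_c w x c) *m u x.
  apply/matrixP => c a; rewrite !mxE defM summxE; apply: eq_bigr => x _.
  by rewrite !mxE big_ord1 !mxE mulrC.
by apply: summx_sub => x _; apply: submx_trans (submxMl _ _) (uB x).
Qed.

(* [join] matches on [i =P j] and reuses that proof inside a branch, so it
   cannot be evaluated by a plain [case: eqP]. *)
Lemma match_reflect_true (P : Prop) (b : bool) (r : reflect P b) (A : Type)
    (f : P -> A) (g : ~ P -> A) (p : P) :
  (forall p1 p2, f p1 = f p2) ->
  match r with ReflectT e => f e | ReflectF ne => g ne end = f p.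
Proof. by case: r => [e | ne] f_const; [apply: f_const | case: (ne p)]. Qed.

Lemma match_reflect_false (P : Prop) (b : bool) (r : reflect P b) (A : Type)
    (f : P -> A) (g : ~ P -> A) (np : ~ P) :
  (forall np1 np2, g np1 = g np2) ->
  match r with ReflectT e => f e | ReflectF ne => g ne end = g np.
Proof. by case: r => [e | ne] g_const; [case: (np e) | apply: g_const]. Qed.

Lemma big_enum_valT (V : nmodType) (T : finType) (F : T -> V) :
  \sum_(t : T) F t = \sum_(e < #|{: T}|) F (enum_val e).
Proof. by rewrite -big_enum_val. Qed.

Section Join.

Variables (I : finType) (m : I -> nat) (j : I).

Definition rest (u : idx m) : oidx m j := [ffun p => u (sval p)].

Lemma join_at a (c : oidx m j) : join a c j = a.
Proof.
rewrite ffunE (match_reflect_true _ _ (erefl j)); first exact: val_inj.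
by move=> e1 e2; rewrite (eq_irrelevance e1 e2).
Qed.

Lemma join_off a (c : oidx m j) i (ij : i != j) : join a c i = c (exist _ i ij).
Proof.
rewrite ffunE (match_reflect_false _ _ (elimN eqP ij)).
  by rewrite (bool_irrelevance (introN eqP (elimN eqP ij)) ij).
by move=> ne1 ne2; rewrite (bool_irrelevance (introN eqP ne1) (introN eqP ne2)).
Qed.

Lemma join_offE a a' (c : oidx m j) i : i != j -> join a c i = join a' c i.
Proof. by move=> ij; rewrite !(join_off _ _ ij). Qed.

Lemma join_rest (u : idx m) : join (u j) (rest u) = u.
Proof.
apply/ffunP => i; have [-> | ij] := eqVneq i j; first by rewrite join_at.
by rewrite (join_off _ _ ij) ffunE.
Qed.

Lemma rest_join a (c : oidx m j) : rest (join a c) = c.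
Proof. by apply/ffunP => -[i ij]; rewrite ffunE /= (join_off _ _ ij). Qed.

Lemma big_join (V : nmodType) (F : idx m -> V) :
  \sum_(u : idx m) F u = \sum_(a : 'I_(m j)) \sum_(c : oidx m j) F (join a c).
Proof.
rewrite pair_bigA (reindex (fun ac : 'I_(m j) * oidx m j => join ac.1 ac.2)) //.
exists (fun u : idx m => (u j, rest u)) => [[a c] _ | u _] /=.
  by rewrite join_at rest_join.
by rewrite join_rest.
Qed.

Lemma forall_join (P : forall i, 'I_(m i) -> bool) a (c : oidx m j) :
  [forall i, P i (join a c i)] = P j a && [forall p, P (sval p) (c p)].
Proof.
apply/forallP/andP => [Pac | [Pa /forallP Pc] i].
  split; first by have := Pac j; rewrite join_at.
  by apply/forallP => -[i ij]; have := Pac i; rewrite (join_off _ _ ij).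
have [-> | ij] := eqVneq i j; first by rewrite join_at.
by rewrite (join_off _ _ ij); apply: (Pc (exist _ i ij)).
Qed.

Variable R : fieldType.

Definition shiftmx (s q b : nat) : 'M[R]_(s, q) :=
  \matrix_(a, h) ((a : nat) == h + b)%N%:R.

Lemma eq_ext (A : idx m -> R) (x y : I -> int) : x =1 y -> ext A x = ext A y.
Proof.
by move=> xy; apply: eq_bigr => u _; under eq_forallb => i do rewrite xy.
Qed.

Lemma ext_join (A : idx m -> R) (x : I -> int) :
  ext A x = \sum_(c : oidx m j)
    [forall p, coord c p == x (sval p)]%:R *
    \sum_(a : 'I_(m j)) ((a : nat)%:Z == x j)%:R * A (join a c).
Proof.
rewrite /ext big_join exchange_big; apply: eq_bigr => c _.
rewrite mulr_sumr; apply: eq_bigr => a _.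
rewrite (forall_join (fun i (a : 'I_(m i)) => (a : nat)%:Z == x i)).
by case: (_ == _); case: [forall _, _]; rewrite ?(mul1r, mul0r).
Qed.

Lemma ext_shift (A : idx m -> R) (s b : nat) (a : 'I_s) (x : I -> int) :
  x j = (a : nat)%:Z - (b : nat)%:Z ->
  ext A x = \sum_(e < #|{: oidx m j}|)
    [forall p, coord (enum_val e) p == x (sval p)]%:R *
    (shiftmx s (m j) b *m matricize j A) a e.
Proof.
move=> xj; rewrite ext_join (big_enum_valT (T := oidx m j)).
apply: eq_bigr => e _.
congr (_ * _); rewrite !mxE; apply: eq_bigr => h _.
by rewrite !mxE xj eq_sym subr_eq -PoszD eqz_nat.
Qed.

End Join.

Lemma pmode_neq_tag (n : nat) (d : 'I_n -> nat) k k'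
    (i : 'I_(d k)) (i' : 'I_(d k')) :
  k' != k -> (existT _ k' i' : pmode d) != existT _ k i.
Proof. by apply: contraNneq => /(congr1 tag)/= ->. Qed.

Lemma pmode_neq_tagged (n : nat) (d : 'I_n -> nat) k (i i' : 'I_(d k)) :
  i' != i -> (existT _ k i' : pmode d) != existT _ k i.
Proof. by rewrite eq_Tagged. Qed.

Section OuterConv.

Unset Implicit Arguments.
Context (R : fieldType) (n : nat) (z d : 'I_n -> nat).
Context (m : forall k : 'I_n, 'I_(d k) -> nat).
Context (G : idx z -> R) (H : forall k : 'I_n, idx (m k) -> R).
Context (k : 'I_n) (i : 'I_(d k)).
Set Implicit Arguments.

Local Notation s := (conv_size z m (existT _ k i)).
Lemma outer_conv_join (a a0 : 'I_s) (c : oidx (conv_size z m) (existT _ k i)) :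
  outer_conv G H (join a c) = \sum_(tau : idx z) G tau *
    ext (H k) (fun i' => coord (join a c) (existT _ k i') - coord tau k) *
    \prod_(k' | k' != k)
      ext (H k') (fun i' => coord (join a0 c) (existT _ k' i') - coord tau k').
Proof.
apply: eq_bigr => tau _; rewrite (bigD1 k) //= mulrA; congr (_ * _).
apply: eq_bigr => k' k'k; apply: eq_ext => i'.
by rewrite (join_offE _ a0) // pmode_neq_tag.
Qed.

Lemma tucker_rank_outer_conv_le_mul :
  (tucker_rank (existT _ k i) (outer_conv G H) <= z k * tucker_rank i (H k))%N.
Proof.
rewrite /tucker_rank; have [s0 | s_gt0] := posnP s.
  by apply: leq_trans (rank_leq_row _) _; rewrite s0.
pose a0 : 'I_s := Ordinal s_gt0.
pose S b := (shiftmx R s (m k i) b *m matricize i (H k))^T.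
pose t0 (c : 'I_#|{: oidx (conv_size z m) (existT _ k i)}|) :=
  join a0 (enum_val c).
pose w (tau : idx z) (e : 'I_#|{: oidx (m k) i}|) c := G tau *
  [forall p, coord (enum_val e) p ==
             coord (t0 c) (existT _ k (sval p)) - coord tau k]%:R *
  \prod_(k' | k' != k)
    ext (H k') (fun i' => coord (t0 c) (existT _ k' i') - coord tau k').
apply: (@leq_trans (\rank (\sum_(b < z k) <<S b>>)%MS)).
  apply: (@mxrank_le_outer_sum _ _ _ _ _ _
           (fun x : idx z * _ => row x.2 (S (x.1 k))) (fun x => w x.1 x.2)).
    move=> a c; rewrite mxE (outer_conv_join a a0).
    rewrite -(pair_bigA _ (fun (tau : idx z) e => row e (S (tau k)) 0 a * w tau e c)).
    apply: eq_bigr => tau _.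
    rewrite (@ext_shift _ _ i _ (H k) _ (tau k) a) ?join_at //.
    rewrite mulr_sumr mulr_suml; apply: eq_bigr => e _.
    rewrite !mxE /w !mulrA (mulrAC (G tau)) (mulrC (G tau)).
    congr (_ * (nat_of_bool _)%:R * _); apply: eq_forallb => p.
    by rewrite (join_offE _ a0) // pmode_neq_tagged ?(valP p).
  move=> [tau e]; apply: submx_trans (row_sub _ _) _.
  by rewrite (sumsmx_sup (tau k)) // genmxE.
apply: leq_trans (leq_of_leqif (mxrank_sum_leqif _)) _ => /=.
rewrite -[X in (_ <= X * _)%N]card_ord -sum_nat_const.
by apply: leq_sum => b _; rewrite genmxE mxrank_tr mxrankM_maxr.
Qed.

Lemma tucker_rank_outer_conv_vec_le : d k = 1%N -> (0 < z k)%N ->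
  (tucker_rank (existT _ k i) (outer_conv G H) <= tucker_rank k G)%N.
Proof.
move=> dk1 zk_gt0; rewrite /tucker_rank; have [s0 | s_gt0] := posnP s.
  by apply: leq_trans (rank_leq_row _) _; rewrite s0.
pose a0 : 'I_s := Ordinal s_gt0; pose b0 : 'I_(z k) := Ordinal zk_gt0.
have modeE (i' : 'I_(d k)) : i' = i.
  have val0 (j : 'I_(d k)) : val j = 0%N.
    by apply/eqP; rewrite -leqn0 -ltnS -dk1 ltn_ord.
  by apply: val_inj; rewrite !val0.
pose C := \matrix_(a < s, b < z k) ext (H k) (fun=> (a : nat)%:Z - (b : nat)%:Z).
pose w (e : 'I_#|{: oidx z k}|)
       (c : 'I_#|{: oidx (conv_size z m) (existT _ k i)}|) :=
  \prod_(k' | k' != k) ext (H k') (fun i' =>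
    coord (join a0 (enum_val c)) (existT _ k' i') - coord (join b0 (enum_val e)) k').
apply: (@leq_trans (\rank (C *m matricize k G))); last exact: mxrankM_maxr.
rewrite -[X in (_ <= X)%N]mxrank_tr.
apply: (@mxrank_le_outer_sum _ _ _ _ _ _ (fun e => row e (C *m matricize k G)^T) w).
  2: by move=> e; apply: row_sub.
move=> a c; rewrite mxE (outer_conv_join a a0) (big_join k) exchange_big /=.
rewrite (big_enum_valT (T := oidx z k)); apply: eq_bigr => e _.
rewrite !mxE mulr_suml; apply: eq_bigr => b _.
rewrite [C a b]mxE mxE join_at -mulrA [RHS]mulrAC [RHS]mulrC.
congr (_ * (_ * _)); first by apply: eq_ext => i'; rewrite (modeE i') !join_at.
apply: eq_bigr => k' k'k; apply: eq_ext => i'.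
by rewrite (join_offE b b0).
Qed.

End OuterConv.

Theorem theorem31 (R : realType) (n : nat) (z d : 'I_n -> nat)
    (m : forall k : 'I_n, 'I_(d k) -> nat)
    (G : idx z -> R) (H : forall k : 'I_n, idx (m k) -> R) :
  (forall k, (0 < z k)%N) ->
  (forall k, (0 < d k)%N) ->
  (forall k i, (0 < m k i)%N) ->
  forall (k : 'I_n) (i : 'I_(d k)),
    (tucker_rank (existT (fun k => 'I_(d k)) k i) (outer_conv G H)
     <= (if d k == 1%N
         then minn (conv_size z m (existT _ k i)) (tucker_rank k G)
         else minn (conv_size z m (existT _ k i))
                   (z k * tucker_rank i (H k))))%N.
Proof.
move=> z_gt0 _ _ k i.
have rank_le_s := rank_leq_row (matricize (existT _ k i) (outer_conv G H)).
case: eqP => [dk1 | _]; rewrite leq_min rank_le_s /=.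
  exact: tucker_rank_outer_conv_vec_le.
exact: tucker_rank_outer_conv_le_mul.
Qed.
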